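(* Let $p$ be a prime, $q$ a power of $p$, and $F$ a field of characteristic $p$ containing $\mathbb{F}_q$. Let $L\in F[x]$ be a monic $q$-polynomial of $q$-degree $n$ such that: (1) $L(x)/x$ is irreducible over $F$; (2) $L$ is not a $q^s$-polynomial for any integer $s>1$; (3) $L=x^{q^n}+a_{n-k}x^{q^{n-k}}+\cdots+a_0x$ with $1\leq k\leq n$ and $a_{n-k}\neq0$. Let $V$ be the space of roots of $L$ in a splitting field $E$ of $L$ over $F$, and let $\alpha,\beta\in V$ be linearly independent over $\mathbb{F}_q$. If $d$ is a positive integer such that $\alpha^d,\alpha^{d-1}\beta,\dots,\beta^d$ are linearly dependent over $F$, then $d\geq q^k+1$.
   Context: A $q$-polynomial of $q$-degree $n$ is $\sum_{i=0}^n a_ix^{q^i}$ with $a_n\neq0$; it is a $q^s$-polynomial if only exponents $q^j$ with $s\mid j$ occur. *)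

From HB Require Import structures.
From mathcomp Require Import all_boot all_order all_algebra all_field.
Set Implicit Arguments. Unset Strict Implicit. Unset Printing Implicit Defensive.
Import GRing.Theory.
Local Open Scope ring_scope.

Definition is_qpoly (R : nzRingType) (q : nat) (L : {poly R}) : Prop :=
  forall j : nat, L`_j != 0 -> exists i : nat, j = (q ^ i)%N.

Definition qpoly_of_qdeg (R : nzRingType) (q n : nat) (L : {poly R}) : Prop :=
  is_qpoly q L /\ size L = (q ^ n).+1.

Definition is_qs_poly (R : nzRingType) (q s : nat) (L : {poly R}) : Prop :=
  forall j : nat, L`_j != 0 -> exists i : nat, j = (q ^ i)%N /\ (s %| i)%N.

(* F contains the field F_q: X^q - X has q distinct roots in F. *)
Definition contains_Fq (F : fieldType) (q : nat) : Prop :=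
  exists s : seq F, [/\ uniq s, size s = q & all (fun a => a ^+ q == a) s].

(* a, b in E are linearly independent over F_q = {c in F | c^q = c}. *)
Definition Fq_lin_indep (F : fieldType) (E : fieldExtType F) (q : nat)
  (a b : E) : Prop :=
  forall c1 c2 : F, c1 ^+ q = c1 -> c2 ^+ q = c2 ->
    c1 *: a + c2 *: b = 0 -> c1 = 0 /\ c2 = 0.

From HB Require Import structures.
From mathcomp Require Import all_boot all_order all_algebra all_field.
From mathcomp Require Import ring zify.
Import GRing.Theory.
Local Open Scope ring_scope.
Set Implicit Arguments. Unset Strict Implicit. Unset Printing Implicit Defensive.

(* Put g = beta / alpha.  Since L(x)/x is irreducible, alpha has degree q^n - 1
   over F, and a linear dependence among the alpha^(d-i) beta^i says that g has
   degree at most d.  In g^(q^n) L(alpha) - L(g alpha) = 0 the leading terms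
   cancel, and by the gap in the coefficients of L what remains is alpha times
   a polynomial of degree < q^(n-k) over F(g) vanishing at alpha.  If that
   polynomial is nonzero, q^n - 1 <= (q^(n-k) - 1) [F(g):F], which forces
   d > q^k.  Otherwise g^(q^i) = g whenever x^(q^i) occurs in L; the least
   positive period of g under x |-> x^q then divides all these i, so by (2)
   g^q = g, i.e. beta is an F_q-multiple of alpha.  Of (3) only the vanishing of the
   coefficients strictly between x^(q^(n-k)) and x^(q^n) is used. *)

Lemma dvdp_Xl (R : idomainType) (p : {poly R}) : ('X %| p) = (p`_0 == 0).
Proof. by rewrite -['X]subr0 -polyC0 dvdp_XsubCl /root horner_coef0. Qed.

Section QPowerPeriods.

Variables (R : pzSemiRingType) (q : nat) (x : R).

Lemma expr_qpow_period_mod s m :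
  x ^+ (q ^ s) = x -> x ^+ (q ^ m) = x ^+ (q ^ (m %% s)).
Proof.
move=> xs; have xst t : x ^+ ((q ^ s) ^ t) = x.
  by elim: t => [|t IHt]; rewrite ?expr1 // expnS exprM xs.
by rewrite {1}(divn_eq m s) expnD [(_ * s)%N]mulnC expnM exprM xst.
Qed.

Lemma exists_qpow_period n : (0 < n)%N -> x ^+ (q ^ n) = x ->
  exists2 s, (0 < s)%N && (x ^+ (q ^ s) == x)
           & forall m, x ^+ (q ^ m) = x -> (s %| m)%N.
Proof.
move=> n_gt0 xn; have ex_period : exists s, (0 < s)%N && (x ^+ (q ^ s) == x).
  by exists n; rewrite n_gt0 xn eqxx.
case: (ex_minnP ex_period) => s /andP[s_gt0 /eqP xs] s_min.
exists s => [|m xm]; first by rewrite s_gt0 xs eqxx.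
apply/eqP; apply: contraTeq isT; rewrite -lt0n => ms_gt0.
have := s_min (m %% s)%N; rewrite ms_gt0 -(expr_qpow_period_mod m xs) xm eqxx.
by move/(_ isT); rewrite leqNgt ltn_pmod.
Qed.

End QPowerPeriods.

Lemma ltn_of_predn_mul_leq Q B b d :
  (1 < B)%N -> (b < Q)%N -> ((Q * B).-1 <= b * d)%N -> (B < d)%N.
Proof. move=> *; nia. Qed.

Section QPolynomials.

Variables (R : nzRingType) (q : nat) (L : {poly R}).
Hypothesis qpL : is_qpoly q L.

Lemma qpoly_coef0 : (0 < q)%N -> L`_0 = 0.
Proof.
move=> q_gt0; apply/eqP; apply: contraT => /qpL[i] /esym/eqP.
by rewrite expn_eq0 eqn0Ngt q_gt0.
Qed.

Lemma qpoly_coef_gap m n : (1 < q)%N ->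
  (forall i, (m < i < n)%N -> L`_(q ^ i) = 0) ->
  forall j, (q ^ m < j < q ^ n)%N -> L`_j = 0.
Proof.
move=> q_gt1 gap j mjn; apply/eqP; apply: contraT => /[dup] /qpL[i ji].
by rewrite ji !ltn_exp2l // in mjn; rewrite ji gap ?eqxx.
Qed.

Lemma qpoly_qpow_fixed (S : pzSemiRingType) (x : S) n :
  (forall s, (1 < s)%N -> ~ is_qs_poly q s L) ->
  (0 < n)%N -> L`_(q ^ n) != 0 ->
  (forall i, L`_(q ^ i) != 0 -> x ^+ (q ^ i) = x) -> x ^+ q = x.
Proof.
move=> not_qs n_gt0 Ln fixx.
have [s /andP[s_gt0 /eqP xs] s_dvd] := exists_qpow_period n_gt0 (fixx n Ln).
have qsL : is_qs_poly q s L.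
  move=> j /[dup] Lj /qpL[i ji]; exists i; split=> //.
  by apply/s_dvd/fixx; rewrite -ji.
have s1 : s = 1%N.
  by apply/eqP; rewrite eqn_leq s_gt0 andbT leqNgt; apply/negP => /not_qs.
by move: xs; rewrite s1 expn1.
Qed.

End QPolynomials.

Section FieldExtension.

Variables (F : fieldType) (E : fieldExtType F).

Lemma contains_Fq_fixed_alg q (x : E) : (1 < q)%N -> contains_Fq F q ->
  x ^+ q = x -> exists2 c : F, c ^+ q = c & x = c%:A.
Proof.
move=> q_gt1 [s [s_uniq s_size s_fixed]] xq.
have [/mapP[c cs ->]|x_notin] := boolP (x \in map (in_alg E) s).
  by exists c => //; apply/eqP; apply: (allP s_fixed).
pose P : {poly E} := 'X^q - 'X.
have P_size : size P = q.+1.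
  by rewrite size_polyDl size_polyXn // size_polyN size_polyX ltnS.
have P_roots : all (root P) (x :: map (in_alg E) s).
  rewrite /= /root !hornerE xq subrr eqxx /=; apply/allP => _ /mapP[c cs ->].
  by rewrite !hornerE -rmorphXn (eqP (allP s_fixed c cs)) subrr.
have := max_poly_roots _ P_roots; rewrite -size_poly_eq0 P_size /= x_notin.
rewrite map_inj_uniq ?s_uniq; last exact: fmorph_inj.
by rewrite size_map s_size ltnn => /(_ isT isT).
Qed.

Lemma Fq_lin_indep_neq0 q (a b : E) : (0 < q)%N -> Fq_lin_indep q a b -> a != 0.
Proof.
move=> q_gt0 indep; apply/eqP => a0.
have [] := indep 1 0;
  rewrite ?expr1n ?expr0n ?eqn0Ngt ?q_gt0 ?a0 ?scaler0 ?scale0r ?addr0 //.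
by move/eqP; rewrite oner_eq0.
Qed.

Lemma Fq_lin_indep_scale q (a b : E) (c : F) : (-1) ^+ q = -1 :> F ->
  Fq_lin_indep q a b -> c ^+ q = c -> b != c *: a.
Proof.
move=> m1q indep cq; apply/eqP => bE.
have [_ /eqP] : c = 0 /\ -1 = 0 :> F.
  by apply: indep; rewrite // bE scaleN1r subrr.
by rewrite oppr_eq0 oner_eq0.
Qed.

Lemma adjoin_degree_lt_size (K : {subfield E}) (M : {poly E}) x :
  M \is a polyOver K -> M != 0 -> root M x -> (adjoin_degree K x < size M)%N.
Proof.
move=> KM M0 Mx; rewrite ltnNge; apply: contra M0 => M_small.
by rewrite -(root_small_adjoin_poly KM M_small).
Qed.

Lemma adjoin_degree_tower (K : {subfield E}) x :
  (adjoin_degree 1 x <= adjoin_degree K x * \dim K)%N.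
Proof.
have := dimvS (adjoinSl x (sub1v K)).
by rewrite (dim_Fadjoin 1%AS) dim_Fadjoin dimv1 muln1.
Qed.

Lemma adjoin_degree_irredp_root (P : {poly F}) x :
  irreducible_poly P -> root (map_poly (in_alg E) P) x ->
  adjoin_degree 1 x = (size P).-1.
Proof.
move=> irrP Px; have /polyOver1P[P0 defP0] := minPolyOver 1%AS x.
have P0_size : size P0 = (adjoin_degree 1 x).+1.
  by rewrite -(size_map_poly (in_alg E)) -defP0 size_minPoly.
have P0_dvd : P0 %| P.
  by rewrite -(dvdp_map (in_alg E)) -defP0 minPoly_dvdp //; apply/polyOver1P; exists P.
have /eqp_size <- : P0 %= P by apply: (irrP.2 _ _ P0_dvd); rewrite P0_size.
by rewrite P0_size.
Qed.

Lemma irredp_coef0_neq0 (P : {poly F}) (x : E) :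
  irreducible_poly P -> root (map_poly (in_alg E) P) x -> x != 0 -> P`_0 != 0.
Proof.
move=> irrP Px; apply: contraTneq => P0; rewrite negbK.
have XP : 'X %| P by rewrite dvdp_Xl P0.
have XP_eqp : 'X %= P by apply: (irrP.2 _ _ XP); rewrite size_polyX.
rewrite -(eqp_map (in_alg E)) map_polyX in XP_eqp.
by move: Px; rewrite -(eqp_root XP_eqp) /root hornerX.
Qed.

Lemma irredp_divX_root (L : {poly F}) (a : E) :
  L`_0 = 0 -> irreducible_poly (L %/ 'X) -> a != 0 ->
  root (map_poly (in_alg E) L) a -> L`_1 != 0 /\ adjoin_degree 1 a = (size L).-2.
Proof.
move=> L0 irrP a0 La; set P := L %/ 'X.
have LP : L = P * 'X by rewrite divpK // dvdp_Xl L0.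
have Pa : root (map_poly (in_alg E) P) a.
  by move: La; rewrite LP rmorphM /= map_polyX rootM /root hornerX (negPf a0) orbF.
split; first by rewrite LP coefMX /= (irredp_coef0_neq0 irrP Pa a0).
by rewrite (adjoin_degree_irredp_root irrP Pa) -/P LP size_mulX ?irredp_neq0.
Qed.

Lemma free_homog_monomials (a b : E) d : a != 0 ->
  (d < adjoin_degree 1 (b / a))%N ->
  free [seq a ^+ (d - i) * b ^+ i | i <- iota 0 d.+1].
Proof.
move=> a0 d_lt; pose m (i : 'I_d.+1) := a ^+ (d - i) * b ^+ i.
have -> : [seq a ^+ (d - i) * b ^+ i | i <- iota 0 d.+1]
          = [tuple m i | i < d.+1] :> seq E.
  by rewrite -val_enum_ord -map_comp.
apply/freeP => c rel i.
pose G : {poly E} := \poly_(j < d.+1) (c (inord j))%:A.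
have G_root : G.[b / a] = 0.
  have : G.[b / a] * a ^+ d = 0.
    rewrite horner_poly mulr_suml -[RHS]rel; apply: eq_bigr => j _.
    rewrite inord_val -tnth_nth tnth_mktuple /m -mulrA mulr_algl; congr (_ *: _).
    have -> : a ^+ d = a ^+ (d - j) * a ^+ j by rewrite -exprD subnK // -ltnS.
    by rewrite mulrCA -exprMn divfK.
  by move/eqP; rewrite mulf_eq0 expf_eq0 (negPf a0) andbF orbF => /eqP.
have G0 : G = 0.
  apply/eqP; rewrite -(root_small_adjoin_poly (K := 1%AS) (x := b / a)).
  - exact/rootP.
  - by apply/polyOver_poly => j _; rewrite rpredZ ?mem1v.
  - exact: leq_trans (size_poly _ _) d_lt.
move/polyP/(_ i): G0; rewrite coef_poly ltn_ord inord_val coef0.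
by move/eqP; rewrite scaler_eq0 oner_eq0 orbF => /eqP.
Qed.

Lemma horner_root_ratio_sum (L : {poly F}) (a g : E) N :
  root (map_poly (in_alg E) L) a -> root (map_poly (in_alg E) L) (g * a) ->
  \sum_(j < size L) (L`_j)%:A * (g ^+ N - g ^+ j) * a ^+ j = 0.
Proof.
move=> /rootP La /rootP Lga.
have : g ^+ N * (map_poly (in_alg E) L).[a] - (map_poly (in_alg E) L).[g * a] = 0.
  by rewrite La Lga mulr0 subr0.
rewrite !horner_coef size_map_poly mulr_sumr -sumrB => sum0.
rewrite -[RHS]sum0; apply: eq_bigr => j _; rewrite coef_map exprMn /=; ring.
Qed.

Lemma root_ratio_dichotomy (L : {poly F}) N Q (a g : E) :
  size L = N.+1 -> L`_0 = 0 -> (forall j, (Q < j < N)%N -> L`_j = 0) ->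
  a != 0 -> root (map_poly (in_alg E) L) a ->
  root (map_poly (in_alg E) L) (g * a) ->
  (adjoin_degree <<1; g>> a < Q)%N \/ (forall j, L`_j != 0 -> g ^+ N = g ^+ j).
Proof.
move=> L_size L0 gap a0 La Lga.
pose c j := (L`_j)%:A * (g ^+ N - g ^+ j).
have c_out j : (size L <= j)%N -> c j = 0.
  by move=> Lj; rewrite /c nth_default ?scale0r ?mul0r.
have c_gap j : (Q < j)%N -> c j = 0.
  move=> Qj; case: (ltngtP j N) => [jN | Nj | ->]; last by rewrite /c subrr mulr0.
    by rewrite /c gap ?Qj // scale0r mul0r.
  by rewrite c_out // L_size.
pose C := \poly_(j < size L) c j; pose M := \poly_(j < Q) c j.+1.
have CM : C = M * 'X.
  apply/polyP => -[|j]; rewrite coefMX !coef_poly /=.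
    by rewrite /c L0 scale0r mul0r if_same.
  case: ltnP => jL; case: ltnP => jQ //; first by rewrite c_gap.
  by rewrite c_out.
have Ma : M.[a] = 0.
  have : C.[a] = 0 by rewrite horner_poly; exact: horner_root_ratio_sum.
  by rewrite CM hornerMX => /eqP; rewrite mulf_eq0 (negPf a0) orbF => /eqP.
have [M0 | M_neq0] := eqVneq M 0; [right | left].
  move=> j Lj; have : c j = 0.
    have [jL | /c_out //] := ltnP j (size L).
    by have := congr1 (coefp j) CM; rewrite /= M0 mul0r coef0 coef_poly jL.
  by move/eqP; rewrite mulf_eq0 scaler_eq0 oner_eq0 (negPf Lj) subr_eq0 => /eqP.
apply: leq_trans (adjoin_degree_lt_size _ M_neq0 (introT rootP Ma)) (size_poly _ _).
apply/polyOver_poly => j _.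
by rewrite rpredM ?rpredB ?rpredX ?rpredZ ?mem1v ?memv_adjoin.
Qed.

End FieldExtension.

Theorem theorem7p9 (p e : nat) (F : fieldType) (L : {poly F}) (n k : nat)
  (E : fieldExtType F) (alpha beta : E) (d : nat) :
  prime p -> (0 < e)%N -> p \in [pchar F] -> contains_Fq F (p ^ e) ->
  L \is monic -> qpoly_of_qdeg (p ^ e) n L ->
  (* (1) L(x)/x is irreducible over F *)
  irreducible_poly (L %/ 'X) ->
  (* (2) L is not a q^s-polynomial for any s > 1 *)
  (forall s : nat, (1 < s)%N -> ~ is_qs_poly (p ^ e) s L) ->
  (* (3) L = x^(q^n) + a_(n-k) x^(q^(n-k)) + ... + a_0 x with a_(n-k) != 0 *)
  (1 <= k <= n)%N ->
  L`_((p ^ e) ^ (n - k)) != 0 ->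
  (forall i : nat, (n - k < i < n)%N -> L`_((p ^ e) ^ i) = 0) ->
  (* E is a splitting field of L over F *)
  splittingFieldFor 1%VS (map_poly (in_alg E) L) fullv ->
  root (map_poly (in_alg E) L) alpha -> root (map_poly (in_alg E) L) beta ->
  Fq_lin_indep (p ^ e) alpha beta ->
  (0 < d)%N ->
  ~~ free [seq alpha ^+ (d - i) * beta ^+ i | i <- iota 0 d.+1] ->
  ((p ^ e) ^ k + 1 <= d)%N.
Proof.
move=> p_pr e_gt0 pcharF Fq_sub monL [qpL L_size] irrP not_qs /andP[k_gt0 kn] _ gap _
  La Lb indep _ dependent.
set q := (p ^ e)%N in Fq_sub qpL L_size not_qs gap indep *.
have q_gt1 : (1 < q)%N by rewrite -(expn0 p) ltn_exp2l ?prime_gt1.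
have a0 := Fq_lin_indep_neq0 (ltnW q_gt1) indep.
have L0 := qpoly_coef0 qpL (ltnW q_gt1).
have [L1 deg_a] := irredp_divX_root L0 irrP a0 La.
rewrite L_size /= in deg_a.
set g := beta / alpha.
have Lga : root (map_poly (in_alg E) L) (g * alpha) by rewrite divfK.
have deg_g : (adjoin_degree 1 g <= d)%N.
  by rewrite leqNgt; apply: contra dependent; apply: free_homog_monomials.
have [deg_lt | fixg] :=
  root_ratio_dichotomy L_size L0 (qpoly_coef_gap qpL q_gt1 gap) a0 La Lga.
  rewrite addn1; apply: (ltn_of_predn_mul_leq _ deg_lt).
    by rewrite -[1%N](expn0 q) ltn_exp2l.
  rewrite -expnD subnK // -deg_a.
  apply: leq_trans (adjoin_degree_tower <<1; g>>%AS alpha) _.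
  by rewrite leq_mul2l (dim_Fadjoin 1%AS) dimv1 muln1 deg_g orbT.
have gq : g ^+ q = g.
  apply: (qpoly_qpow_fixed qpL not_qs (leq_trans k_gt0 kn)) => [|i Li].
    by rewrite -[(q ^ n)%N]/(q ^ n).+1.-1 -L_size -lead_coefE (monicP monL) oner_neq0.
  by rewrite -(fixg _ Li) (fixg _ L1) expr1.
have [c cq gc] := contains_Fq_fixed_alg q_gt1 Fq_sub gq.
have m1q : (-1 : F) ^+ q = -1.
  by rewrite exprNn_pchar ?expr1n // (eq_pnat _ (pcharf_eq pcharF)) pnatX pnat_id.
by case/eqP: (Fq_lin_indep_scale m1q indep cq); rewrite -mulr_algl -gc divfK.
Qed.
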